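(* Let $(P,\leq,{}',M,R,0,1)$ be an operator residuated poset satisfying operator divisibility, and assume that for all $x,y\in P$ $M(x,y)=L(U(x,y'),y)$ and $R(x,y)=LU(x',L(x,y))$. Then $(P,\leq,{}',0,1)$ is a generalized orthomodular poset.
   Context: For a poset $(P,\leq)$ and $A\subseteq P$: $L(A):=\{x\in P\mid x\leq a\text{ for all }a\in A\}$, $U(A):=\{x\in P\mid a\leq x\text{ for all }a\in A\}$; $L(a,b)=L(\{a,b\})$, $L(a,B)=L(\{a\}\cup B)$, $LU(A)=L(U(A))$, and similarly for $U$. An orthoposet is a bounded poset $(P,\leq,{}',0,1)$ with a unary operation $'$ that is an antitone involution ($x''=x$; $x\leq y\Rightarrow y'\leq x'$) and a complementation ($L(x,x')=\{0\}$, $U(x,x')=\{1\}$). A generalized orthomodular poset is an orthoposet such that for all $x,y$, $x\leq y$ implies $U(y)=U(x,L(x',y))$. An operator residuated poset is a tuple $(P,\leq,{}',M,R,0,1)$ where $(P,\leq,0,1)$ is a bounded poset, $'$ an antitone unary operation, and $M,R:P^2\to 2^P$ satisfy for all $x,y,z\in P$: $M(x,y)\subseteq L(z)$ iff $L(x)\subseteq R(y,z)$; $R(x,0)=L(x')$; $R(x,x'')=R(x'',x)=P$. It satisfies operator divisibility if $x\leq y$ implies $L(y,U(R(y,x)))=L(x)$. *)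

Definition pset (T : Type) := T -> Prop.

Definition sub {T} (A B : pset T) : Prop := forall z, A z -> B z.
Definition seteq {T} (A B : pset T) : Prop := forall z, A z <-> B z.

Definition setT {T} : pset T := fun _ => True.
Definition single {T} (a : T) : pset T := fun z => z = a.
Definition pair {T} (a b : T) : pset T := fun z => z = a \/ z = b.
Definition addel {T} (a : T) (B : pset T) : pset T := fun z => z = a \/ B z.

Section Poset.
Context {T : Type} (le : T -> T -> Prop).

Definition partial_order : Prop :=
  (forall x, le x x) /\
  (forall x y, le x y -> le y x -> x = y) /\
  (forall x y z, le x y -> le y z -> le x z).

Definition bounded (zero one : T) : Prop :=
  forall x, le zero x /\ le x one.

Definition Lset (A : pset T) : pset T := fun x => forall a, A a -> le x a.
Definition Uset (A : pset T) : pset T := fun x => forall a, A a -> le a x.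

Definition antitone (c : T -> T) : Prop := forall x y, le x y -> le (c y) (c x).

Definition orthoposet (c : T -> T) (zero one : T) : Prop :=
  partial_order /\ bounded zero one /\
  (forall x, c (c x) = x) /\ antitone c /\
  (forall x, seteq (Lset (pair x (c x))) (single zero)) /\
  (forall x, seteq (Uset (pair x (c x))) (single one)).

Definition gen_orthomodular (c : T -> T) (zero one : T) : Prop :=
  orthoposet c zero one /\
  forall x y, le x y ->
    seteq (Uset (single y)) (Uset (addel x (Lset (pair (c x) y)))).

Definition operator_residuated (c : T -> T) (M R : T -> T -> pset T)
    (zero one : T) : Prop :=
  partial_order /\ bounded zero one /\ antitone c /\
  (forall x y z, sub (M x y) (Lset (single z)) <-> sub (Lset (single x)) (R y z)) /\
  (forall x, seteq (R x zero) (Lset (single (c x)))) /\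
  (forall x, seteq (R x (c (c x))) setT /\ seteq (R (c (c x)) x) setT).

Definition operator_divisibility (R : T -> T -> pset T) : Prop :=
  forall x y, le x y ->
    seteq (Lset (addel y (Uset (R y x)))) (Lset (single x)).

End Poset.


(* The key
   observation is that, for these operators, residuation characterizes the
   order:  1 ∈ R(y,z)  iff  y <= z  (lemma [R_one_iff]).  From it:
   - the axiom R(x,x'') = R(x'',x) = P gives x'' = x, so ' is an involution;
   - L(x,x') ⊆ M(x',x), which residuation with R(x,0) = L(x') maps below 0;
   - 1 ∈ R(x,x) = LU(x',L(x,x)) forces every upper bound of x, x' above 1.
   Orthomodularity follows from operator divisibility applied to y' <= x':
   if z bounds x and L(x',y) from above, then z' is a lower bound of y' and of
   U(R(x',y')), because complements of upper bounds of R(x',y') lie in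
   L(x',y) (lemma [compl_upper_R]); hence z' <= y', i.e. y <= z. *)

Lemma mem_LU {T : Type} (le : T -> T -> Prop) (A : pset T) (a : T) :
  A a -> Lset le (Uset le A) a.
Proof. intros Ha u Hu. exact (Hu a Ha). Qed.

Section OperatorResiduated.

Variables (T : Type) (le : T -> T -> Prop) (c : T -> T)
  (M R : T -> T -> pset T) (zero one : T).

Hypothesis le_refl : forall x, le x x.
Hypothesis le_antisym : forall x y, le x y -> le y x -> x = y.
Hypothesis le_trans : forall x y z, le x y -> le y z -> le x z.
Hypothesis le_bounds : bounded le zero one.
Hypothesis c_antitone : antitone le c.
Hypothesis residuation : forall x y z,
  sub (M x y) (Lset le (single z)) <-> sub (Lset le (single x)) (R y z).
Hypothesis R_zero : forall x, seteq (R x zero) (Lset le (single (c x))).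
Hypothesis R_cc : forall x, seteq (R x (c (c x))) setT /\ seteq (R (c (c x)) x) setT.
Hypothesis M_def : forall x y,
  seteq (M x y) (Lset le (addel y (Uset le (pair x (c y))))).
Hypothesis R_def : forall x y,
  seteq (R x y) (Lset le (Uset le (addel (c x) (Lset le (pair x y))))).

Lemma R_one_iff (y z : T) : R y z one <-> le y z.
Proof.
  split.
  - intros Hone.
    (* R(y,z) is a lower set containing 1, so L(1) ⊆ R(y,z). *)
    assert (Hres : sub (M one y) (Lset le (single z))).
    { apply (proj2 (residuation one y z)). intros w Hw.
      apply (proj2 (R_def y z w)). intros a Ha.
      apply le_trans with one; [apply Hw; reflexivity |].
      exact (proj1 (R_def y z one) Hone a Ha). }
    (* y ∈ M(1,y), since every upper bound of {1, y'} is above 1 >= y. *)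
    apply (Hres y); [| reflexivity].
    apply (proj2 (M_def one y y)). intros a [-> | Ha]; [apply le_refl |].
    apply le_trans with one; [apply le_bounds | apply Ha; left; reflexivity].
  - intros Hyz.
    apply (proj1 (residuation one y z)); [| intros a ->; apply le_refl].
    intros w Hw a ->.
    apply le_trans with y; [| exact Hyz].
    apply (proj1 (M_def one y w) Hw). left; reflexivity.
Qed.

Lemma c_involutive (x : T) : c (c x) = x.
Proof.
  apply le_antisym; apply R_one_iff.
  - exact (proj2 (proj2 (R_cc x) one) I).
  - exact (proj2 (proj1 (R_cc x) one) I).
Qed.

Lemma c_reflect (a b : T) : le (c a) (c b) -> le b a.
Proof.
  intros H. rewrite <- (c_involutive a), <- (c_involutive b).
  exact (c_antitone _ _ H).
Qed.

(* L(x,x') = {0}: lower bounds of x, x' lie in M(x',x) ⊆ L(0). *)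
Lemma meet_compl (x : T) : seteq (Lset le (pair x (c x))) (single zero).
Proof.
  intros z; split.
  - intros Hz.
    assert (Hres : sub (M (c x) x) (Lset le (single zero))).
    { apply (proj2 (residuation (c x) x zero)). intros w Hw.
      exact (proj2 (R_zero x w) Hw). }
    assert (Hzx : le z x) by (apply Hz; left; reflexivity).
    assert (Hzcx : le z (c x)) by (apply Hz; right; reflexivity).
    assert (Hz0 : le z zero).
    { apply (Hres z); [| reflexivity].
      apply (proj2 (M_def (c x) x z)). intros a [-> | Ha]; [exact Hzx |].
      apply le_trans with (c x); [exact Hzcx | apply Ha; left; reflexivity]. }
    exact (le_antisym _ _ Hz0 (proj1 (le_bounds z))).
  - intros -> a _. apply le_bounds.
Qed.

(* U(x,x') = {1}: by [R_one_iff], 1 ∈ R(x,x) = LU(x',L(x,x)). *)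
Lemma join_compl (x : T) : seteq (Uset le (pair x (c x))) (single one).
Proof.
  intros z; split.
  - intros Hz.
    assert (Hone := proj1 (R_def x x one) (proj2 (R_one_iff x x) (le_refl x))).
    assert (Hone_z : le one z).
    { apply Hone. intros a [-> | Ha]; [apply Hz; right; reflexivity |].
      apply le_trans with x; [apply Ha; left; reflexivity |].
      apply Hz; left; reflexivity. }
    exact (le_antisym _ _ (proj2 (le_bounds z)) Hone_z).
  - intros -> a _. apply le_bounds.
Qed.

(* For x <= y, the complement of any upper bound b of R(x',y') lies in
   L(x',y): indeed x and y' both belong to R(x',y') = LU(x,L(x',y')). *)
Lemma compl_upper_R (x y b : T) :
  le x y -> Uset le (R (c x) (c y)) b -> Lset le (pair (c x) y) (c b).
Proof.
  intros Hxy Hb.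
  assert (Hxb : le x b).
  { apply Hb, (proj2 (R_def (c x) (c y) x)), mem_LU.
    left. symmetry. apply c_involutive. }
  assert (Hcyb : le (c y) b).
  { apply Hb, (proj2 (R_def (c x) (c y) (c y))), mem_LU.
    right. intros a [-> | ->]; [exact (c_antitone _ _ Hxy) | apply le_refl]. }
  intros a [-> | ->]; [exact (c_antitone _ _ Hxb) |].
  apply c_reflect. rewrite c_involutive. exact Hcyb.
Qed.

Hypothesis divisibility : operator_divisibility le R.

Lemma orthomodular_law (x y : T) :
  le x y -> seteq (Uset le (single y)) (Uset le (addel x (Lset le (pair (c x) y)))).
Proof.
  intros Hxy z; split.
  - intros Hz. assert (Hyz : le y z) by (apply Hz; reflexivity).
    intros a [-> | Ha]; apply le_trans with y; auto.
    apply Ha; right; reflexivity.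
  - intros Hz a ->.
    assert (Hxz : le x z) by (apply Hz; left; reflexivity).
    (* z' ∈ L(x', U(R(x',y'))) = L(y') by divisibility for y' <= x'. *)
    apply c_reflect.
    apply (proj1 (divisibility (c y) (c x) (c_antitone _ _ Hxy) (c z)));
      [| reflexivity].
    intros b [-> | Hb]; [exact (c_antitone _ _ Hxz) |].
    apply c_reflect. rewrite c_involutive.
    apply Hz. right. exact (compl_upper_R x y b Hxy Hb).
Qed.

End OperatorResiduated.

Theorem mainTheorem3 (T : Type) (le : T -> T -> Prop) (c : T -> T)
    (M R : T -> T -> pset T) (zero one : T) :
  operator_residuated le c M R zero one ->
  operator_divisibility le R ->
  (forall x y, seteq (M x y) (Lset le (addel y (Uset le (pair x (c y)))))) ->
  (forall x y, seteq (R x y) (Lset le (Uset le (addel (c x) (Lset le (pair x y)))))) ->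
  gen_orthomodular le c zero one.
Proof.
  intros [PO [BD [AT [RES [R0 RT]]]]] DIV HM HR.
  pose proof PO as [Rf [As Tr]].
  split; [unfold orthoposet; split; [exact PO |] |].
  - split; [exact BD | split; [| split; [exact AT | split]]].
    + intros x. eapply c_involutive; eassumption.
    + intros x. eapply meet_compl; eassumption.
    + intros x. eapply join_compl; eassumption.
  - intros x y. eapply orthomodular_law; eassumption.
Qed.
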